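(* In the construction below, for every $k\in\{0,\dots,K-1\}$ and every $u\in U_k$, $$\sum_{w:(u,w)\in A_k}|B_X(w,\tau^{-(k+1)}/3)|\le|B_X(u,6\tau^{-k})|.$$
   Context: Construction. Let $(X,d)$ be a metric space with $n=|X|\ge2$ and $\mathrm{diam}(X)=1$. For $S\subseteq X$, $r\ge0$: $B_X(S,r):=\{x\in X:\exists s\in S,\ d(x,s)\le r\}$ and $B_X(x,r):=B_X(\{x\},r)$. Let $\varepsilon_0:=\min\{d(x,y):x\ne y\}$, $\tau:=12$, $K:=1+\lceil\log_\tau(1/\varepsilon_0)\rceil$. For $\eta>0$ the greedy $\eta$-net is built as: $N_0=\emptyset$; for $j\ge1$, $S_j:=X\setminus B_X(N_{j-1},\eta)$; if $S_j=\emptyset$ output $N_{j-1}$; else pick $x_j\in S_j$ maximizing $|B_X(x,\eta/3)|$ and set $N_j=N_{j-1}\cup\{x_j\}$. For $k=0,\dots,K$ let $U_k$ be the greedy $\tau^{-k}$-net. For $k<K$, $A_k$ is the set of pairs $(u,u')\in U_k\times U_{k+1}$ with (i) $d(u,u')\le4\tau^{-k}$ and (ii) $|B_X(u,\tau^{-k}/3)|\ge\max\{|B_X(w,\tau^{-k}/3)|:w\in B_X(u',6\tau^{-(k+1)})\}$. *)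

From HB Require Import structures.
From mathcomp Require Import all_boot all_order all_algebra.
From mathcomp Require Import all_classical all_reals all_analysis.
Set Implicit Arguments. Unset Strict Implicit. Unset Printing Implicit Defensive.
Import Order.TTheory GRing.Theory Num.Theory.
Local Open Scope ring_scope.

Section Defs.
Variables (R : realType) (T : finType) (d : T -> T -> R).

Definition is_metric : Prop :=
  [/\ forall x y, 0 <= d x y,
      forall x y, d x y = 0 <-> x = y,
      forall x y, d x y = d y x &
      forall x y z, d x z <= d x y + d y z].

Definition diam_one : Prop :=
  (forall x y, d x y <= 1) /\ exists x y, d x y = 1.

Definition ballSX (S : {set T}) (r : R) : {set T} :=
  [set x | [exists s in S, d x s <= r]].
Definition ballX (x : T) (r : R) : {set T} := ballSX [set x] r.

(* eps0 = min { d(x,y) : x <> y }; starting the min at 1 is harmless since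
   all distances are <= 1 (diam = 1) and at least one pair is distinct. *)
Definition eps0 : R :=
  \big[Num.min/1]_(p : T * T | p.1 != p.2) d p.1 p.2.

Definition tau : R := 12%:R.

Definition taupow (k : nat) : R := tau ^- k.

Definition Kbound : nat :=
  (1 + `|Num.ceil (ln (eps0^-1) / ln tau)|)%N.

(* N is a possible output of the greedy eta-net procedure:
   there is a sequence of choices x_1,...,x_m (here s`_0,...,s`_(m-1)) with
   x_j in S_j maximizing |B(x, eta/3)| over S_j, where
   S_j = X \ B_X(N_{j-1}, eta), and S_{m+1} is empty, N = N_m. *)
Definition greedy_net (eta : R) (N : {set T}) : Prop :=
  exists s : seq T,
    [/\ N = [set x in s],
        forall (j : nat) (x0 : T), (j < size s)%N ->
          let Sj := ~: ballSX [set x in take j s] eta in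
          let xj := nth x0 s j in
          xj \in Sj /\
          (forall x, x \in Sj -> #|ballX x (eta / 3%:R)| <= #|ballX xj (eta / 3%:R)|)%N &
        ~: ballSX [set x in s] eta = finset.set0].

Definition Arel (U : nat -> {set T}) (k : nat) (u u' : T) : bool :=
  [&& u \in U k, u' \in U k.+1, d u u' <= 4%:R * taupow k &
      [forall w, (d w u' <= 6%:R * taupow k.+1) ==>
         (#|ballX w (taupow k / 3%:R)| <= #|ballX u (taupow k / 3%:R)|)%N]].

End Defs.

(** The greedy choice makes the points of a greedy [eta]-net pairwise more than
    [eta] apart, so the balls of radius [tau^-(k+1)/3] around the children [w]
    of [u] in [A_k] are pairwise disjoint.  Since [d(u,w) <= 4 tau^-k], each of
    these balls lies in [B(u, 6 tau^-k)], and disjoint subsets of a set have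
    total size at most its size. *)
From HB Require Import structures.
From mathcomp Require Import all_boot all_order all_algebra.
From mathcomp Require Import all_classical all_reals all_analysis.
From mathcomp Require Import lra.
Set Implicit Arguments. Unset Strict Implicit. Unset Printing Implicit Defensive.
Import Order.TTheory GRing.Theory Num.Theory.
Local Open Scope ring_scope.

Lemma leq_sum_card_disjoint (I T : finType) (P : pred I) (F : I -> {set T})
    (S : {set T}) :
  (forall i, P i -> F i \subset S) ->
  (forall i j, P i -> P j -> i != j -> [disjoint F i & F j]) ->
  (\sum_(i | P i) #|F i| <= #|S|)%N.
Proof.
move=> subFS disjF.
have -> : (\sum_(i | P i) #|F i| = \sum_(i | P i) \sum_x (x \in F i))%N.
  by apply: eq_bigr => i _; rewrite -sum1_card big_mkcond.
rewrite exchange_big /= -sum1_card [X in (_ <= X)%N]big_mkcond /=.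
apply: leq_sum => x _.
have [i0 /andP[Pi0 Fi0_x] | noF] :=
  pickP [pred i | P i && (x \in F i)]; last first.
  by rewrite big1 // => i Pi; move: (noF i) => /=; rewrite Pi /= => ->.
have Sx : x \in S := fintype.subsetP (subFS _ Pi0) x Fi0_x.
rewrite (bigD1 i0) //= Fi0_x Sx big1 // => i /andP[Pi ne_i_i0].
by rewrite (disjointFl (disjF _ _ Pi Pi0 ne_i_i0) Fi0_x).
Qed.

Section MetricBalls.
Variables (R : realType) (T : finType) (d : T -> T -> R).
Hypothesis d_sym : forall x y, d x y = d y x.
Hypothesis d_triangle : forall x y z, d x z <= d x y + d y z.

Lemma in_ballX x w r : (x \in ballX d w r) = (d x w <= r).
Proof.
rewrite inE; apply/existsP/idP => [[y /andP[/set1P -> //]] | dxw].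
by exists w; rewrite set11.
Qed.

Lemma ballX_disjoint a b r : r + r < d a b ->
  [disjoint ballX d a r & ballX d b r].
Proof.
move=> far; apply/pred0P => x /=; rewrite !in_ballX.
apply/negP => /andP[dxa dxb].
have := d_triangle a x b; rewrite (d_sym a x); lra.
Qed.

Lemma ballX_subset u w r s : d w u + r <= s -> ballX d w r \subset ballX d u s.
Proof.
move=> le_s; apply/fintype.subsetP => x; rewrite !in_ballX => dxw.
have := d_triangle x w u; lra.
Qed.

Lemma greedy_net_sep eta N :
  greedy_net d eta N -> forall a b, a \in N -> b \in N -> a != b -> eta < d a b.
Proof.
move=> [s [-> choice_s _]] a b.
have later_far i j : (i < j < size s)%N -> eta < d (nth a s j) (nth a s i).
  move=> /andP[lt_ij lt_js].
  have [/setCP not_near _] := choice_s j a lt_js.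
  rewrite ltNge; apply/negP => near; apply: not_near.
  rewrite inE; apply/existsP; exists (nth a s i); rewrite near andbT inE.
  by rewrite -(nth_take a lt_ij) mem_nth // size_take lt_js.
rewrite !inE => sa sb ne_ab.
have ia : (index a s < size s)%N by rewrite index_mem.
have ib : (index b s < size s)%N by rewrite index_mem.
case: (ltngtP (index a s) (index b s)) => [lt_ab | lt_ba | eq_ab].
- by move: (later_far _ _ (introT andP (conj lt_ab ib))); rewrite !nth_index // d_sym.
- by move: (later_far _ _ (introT andP (conj lt_ba ia))); rewrite !nth_index.
- by move: ne_ab; rewrite -(nth_index a sa) -(nth_index a sb) eq_ab eqxx.
Qed.

End MetricBalls.

Theorem claim3p4 (R : realType) (T : finType) (d : T -> T -> R)
  (U : nat -> {set T}) :
  is_metric d -> (1 < #|T|)%N -> diam_one d ->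
  (forall k, (k <= Kbound d)%N -> greedy_net d (taupow R k) (U k)) ->
  forall k, (k < Kbound d)%N -> forall u, u \in U k ->
    (\sum_(w | Arel d U k u w) #|ballX d w (taupow R k.+1 / 3%:R)|
       <= #|ballX d u (6%:R * taupow R k)|)%N.
Proof.
move=> [_ _ d_sym d_tri] _ _ nets k lt_kK u _.
have t_gt0 : 0 < taupow R k by rewrite /taupow invr_gt0 exprn_gt0 // ltr0n.
have tS : taupow R k.+1 = taupow R k / 12%:R by rewrite /taupow exprS invfM mulrC.
apply: leq_sum_card_disjoint => [w | w w' /and4P[_ Uw _ _] /and4P[_ Uw' _ _] ne_ww'].
- case/and4P => _ _ d_uw _; apply: ballX_subset => //.
  rewrite d_sym tS; lra.
- apply: ballX_disjoint => //.
  have := greedy_net_sep d_sym (nets _ lt_kK) Uw Uw' ne_ww'; rewrite tS; lra.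
Qed.
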